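(* Let $h\ge r$ be positive integers and let $0<\beta<1$ be a real. There exists a positive real $\alpha$ depending on $h,r,\beta$ such that the following holds. Let $G$ be any graph on $n$ vertices and let $p=p_r(G)$. For $0\le i\le h$ and $1\le j\le h$, let $\mathcal{A}_{i,j}$ denote the set of $i$-good sequences of length $j$ relative to $(\alpha,\beta,h,r)$ in $V(G)$, and let $\mathcal{B}_{i,j}=V(G)^j\setminus\mathcal{A}_{i,j}$. Then for each $0\le i\le h$, $1\le j\le h$ and $1\le\ell\le j$, \[\sum_{S\in\mathcal{B}_{i,j}}|N(S)|^\ell\le\beta\,n^{j+\ell}p^{j\ell}.\]
   Context: All graphs are finite and simple. For a positive integer $r$, $p_r(G)=t_{K_{1,r}}(G)^{1/r}=\frac1n\left(\frac1n\sum_{v\in V(G)}d(v)^r\right)^{1/r}$ where $n=|G|$. A sequence in a set $W$ is a finite sequence of elements of $W$ (repetitions allowed); its length $|S|$ counts multiplicity; $W^k$ denotes the set of sequences of length $k$ in $W$. For a sequence $S$ in $V(G)$, $N(S)$ is the set of vertices adjacent to every vertex of $S$. Goodness: fix reals $0<\alpha,\beta<1$ and positive integers $h,r$, and let $p=p_r(G)$. A sequence $T$ in $V(G)$ is $0$-good if $|N(T)|\ge\alpha p^{|T|}n$. For $1\le i\le h$, a sequence $S$ in $V(G)$ of length at most $h$ is $i$-good if $S$ is $0$-good and for each $|S|\le k\le h$, the number of $(i-1)$-good sequences in $N(S)^k$ is at least $(1-\beta)|N(S)|^k$. These are called $i$-good relative to $(\alpha,\beta,h,r)$. *)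

From HB Require Import structures.
From mathcomp Require Import all_boot all_order all_algebra.
From mathcomp Require Import reals exp.
Set Implicit Arguments. Unset Strict Implicit. Unset Printing Implicit Defensive.
Import Order.TTheory GRing.Theory Num.Theory.
Local Open Scope ring_scope.

(* A finite simple graph is a symmetric irreflexive relation e on a finType T;
   V(G) = T and n = #|T|. *)
Definition simple_graph (T : finType) (e : rel T) : Prop :=
  symmetric e /\ irreflexive e.

Definition deg (T : finType) (e : rel T) (v : T) : nat := #|[set u | e v u]|.

Definition pr (R : realType) (T : finType) (e : rel T) (r : nat) : R :=
  let n : R := (#|T|)%:R in
  n^-1 * powR (n^-1 * \sum_(v : T) ((deg e v)%:R) ^+ r) (r%:R^-1).

Definition NS (T : finType) (e : rel T) (S : seq T) : {set T} :=
  [set v | all (fun u => e u v) S].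

Definition good0 (R : realType) (T : finType) (e : rel T) (alpha : R) (r : nat)
  (S : seq T) : bool :=
  alpha * (pr R e r) ^+ (size S) * (#|T|)%:R <= (#|NS e S|)%:R.

Fixpoint good (R : realType) (T : finType) (e : rel T) (alpha beta : R)
  (h r : nat) (i : nat) (S : seq T) : bool :=
  match i with
  | 0 => good0 e alpha r S
  | i'.+1 =>
      [&& (size S <= h)%N, good0 e alpha r S &
        [forall k : 'I_h.+1, (size S <= k)%N ==>
          ((1 - beta) * (#|NS e S|)%:R ^+ k <=
           (#|[set t : k.-tuple T |
                 all (fun x => x \in NS e S) t && good e alpha beta h r i' t]|)%:R)]]
  end.

(* A non-(i+1)-good sequence S of length j is either not 0-good, and then
   |N(S)| < alpha p^j n, or for some j <= k <= h more than a beta-fraction of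
   the k-tuples in N(S)^k are not i-good.  In the second case split at the
   threshold |N(S)| = c p^j n: below it the contribution to the l-th moment is
   at most c n^{j+l} p^{jl}; above it |N(S)|^l <= |N(S)|^k / (c p^j n)^{k-l},
   and |N(S)|^k is at most beta^{-1} times the number of bad k-tuples in
   N(S)^k.  Summing over S and counting the pairs (S, t) with t in N(S)^k
   from the side of t (S lies in N(t)^j by symmetry) gives
   beta^{-1} sum_{t not i-good} |N(t)|^j, which the bound at level i controls
   with (j, l) replaced by (k, j).  Hence the tolerances can be chosen
   backwards from beta, shrinking by a factor depending only on beta and h at
   each level.  If p = 0 then every vertex is isolated and all sums vanish. *)

From HB Require Import structures.
From mathcomp Require Import all_boot all_order all_algebra.
From mathcomp Require Import reals exp.
From mathcomp Require Import ring lra zify.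
Import Order.TTheory GRing.Theory Num.Theory.
Local Open Scope ring_scope.

Section SumBounds.
Context {R : numDomainType}.

Lemma ler_sum_card {I : finType} (P : pred I) (F : I -> R) (M : R) :
  0 <= M -> (forall i, P i -> F i <= M) -> \sum_(i | P i) F i <= #|I|%:R * M.
Proof.
move=> M_ge0 FM; apply: le_trans (ler_sum _ FM) _.
by rewrite sumr_const -[M *+ _]mulr_natl ler_wpM2r // ler_nat max_card.
Qed.

Lemma ler_sum_cover {I K : finType} (P P0 : pred I) (Q : K -> pred I) (F : I -> R) :
  (forall i, 0 <= F i) -> (forall i, P i -> P0 i \/ exists k, Q k i) ->
  \sum_(i | P i) F i <= \sum_(i | P0 i) F i + \sum_k \sum_(i | Q k i) F i.
Proof.
move=> F_ge0 cover.
under [X in _ <= _ + X]eq_bigr do rewrite big_mkcond /=.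
rewrite exchange_big /= [X in _ <= X + _]big_mkcond -big_split /= big_mkcond /=.
apply: ler_sum => i _; case: ifP => [/cover [P0i | [k Qki]] | _].
- by rewrite P0i lerDl sumr_ge0 // => k _; case: ifP.
- rewrite (bigD1 k) //= Qki addrCA lerDl addr_ge0 //; first by case: ifP.
  by apply: sumr_ge0 => k' _; case: ifP.
- by rewrite addr_ge0 ?sumr_ge0 // => [|k _]; case: ifP.
Qed.

End SumBounds.

Section Threshold.
Context {R : realFieldType}.

Lemma pow_le_threshold (x Q : R) (l k : nat) : 0 <= x -> 0 < Q -> (l <= k)%N ->
  x ^+ l <= Q ^+ l + x ^+ k / Q ^+ (k - l).
Proof.
move=> x_ge0 Q_gt0 lk; have Q_ge0 := ltW Q_gt0; have [xQ | Qx] := ltP x Q.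
  apply: ler_wpDr; first by rewrite divr_ge0 ?exprn_ge0.
  by rewrite lerXn2r ?nnegrE // ltW.
have x_gt0 : 0 < x by apply: lt_le_trans Qx.
apply: ler_wpDl; first exact: exprn_ge0.
rewrite -(subnK lk) exprD addnK mulrAC ler_peMl ?exprn_ge0 //.
by rewrite ler_pdivlMr ?exprn_gt0 // mul1r lerXn2r ?nnegrE.
Qed.

Lemma sum_pow_threshold {I : finType} (P : pred I) {x : I -> R} {Q : R} {l k : nat} :
  (forall i, 0 <= x i) -> 0 < Q -> (l <= k)%N ->
  \sum_(i | P i) x i ^+ l <= #|I|%:R * Q ^+ l + (\sum_(i | P i) x i ^+ k) / Q ^+ (k - l).
Proof.
move=> x_ge0 Q_gt0 lk; rewrite mulr_suml.
have pointwise i : P i -> x i ^+ l <= Q ^+ l + x i ^+ k / Q ^+ (k - l).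
  by move=> _; apply: pow_le_threshold.
apply: le_trans (ler_sum _ pointwise) _.
by rewrite big_split /= lerD2r ler_sum_card // exprn_ge0 // ltW.
Qed.

End Threshold.

Lemma expr_split {R : comPzRingType} (x y : R) {k j l : nat} : (l <= j <= k)%N ->
  x ^+ (k + j) * y ^+ (k * j) = (y ^+ j * x) ^+ (k - l) * (x ^+ (j + l) * y ^+ (j * l)).
Proof.
move=> /andP [lj jk]; rewrite exprMn -exprM.
have -> : (k + j = (k - l) + (j + l))%N by lia.
have -> : (k * j = j * (k - l) + j * l)%N by nia.
by rewrite !exprD; ring.
Qed.

Lemma card_tuples_in (T : finType) (A : {set T}) (k : nat) :
  #|[set t : k.-tuple T | all (fun x => x \in A) t]| = (#|A| ^ k)%N.
Proof.
rewrite -(card_imset _ (can_inj (@finfun_of_tupleK T k))).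
rewrite (can2_imset_pre _ (@finfun_of_tupleK T k) (@tuple_of_finfunK T k)).
rewrite -[in RHS](card_ord k) -card_ffun_on; apply: eq_card => f.
rewrite !inE; apply/allP/ffun_onP => [fA i | fA _ /mapP [i _ ->] //].
by apply: fA; apply/mapP; exists i; rewrite ?mem_enum.
Qed.

Section CommonNeighbours.
Variables (T : finType) (e : rel T).
Hypothesis e_sym : symmetric e.

Lemma all_in_NS_sym (S t : seq T) :
  all (fun x => x \in NS e S) t = all (fun x => x \in NS e t) S.
Proof.
by apply/allP/allP => st x xS; rewrite inE; apply/allP => y yt;
  move: (st y yt); rewrite inE => /allP /(_ x xS); rewrite e_sym.
Qed.

Lemma sum_card_tuples_in_NS (j k : nat) (g : pred (k.-tuple T)) :
  (\sum_(S : j.-tuple T) #|[set t : k.-tuple T | all (fun x => x \in NS e S) t && g t]|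
   = \sum_(t : k.-tuple T | g t) #|NS e t| ^ j)%N.
Proof.
under eq_bigr do rewrite -sum1dep_card.
rewrite (exchange_big_dep g) /= => [|S t _ /andP [] //].
apply: eq_bigr => t gt; rewrite -card_tuples_in -sum1dep_card.
by apply: eq_bigl => S; rewrite gt andbT all_in_NS_sym.
Qed.

End CommonNeighbours.

Lemma pr_ge0 {R : realType} {T : finType} {e : rel T} {r : nat} : 0 <= pr R e r.
Proof. by rewrite mulr_ge0 ?invr_ge0 ?ler0n ?powR_ge0. Qed.

Lemma card_gt0_pr_gt0 {R : realType} {T : finType} {e : rel T} {r : nat} :
  0 < pr R e r -> (0 < #|T|)%N.
Proof. by rewrite lt0n /pr; apply: contraTneq => ->; rewrite invr0 mul0r ltxx. Qed.

Lemma deg_pr_eq0 {R : realType} {T : finType} {e : rel T} {r : nat} (v : T) :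
  (0 < r)%N -> pr R e r = 0 -> deg e v = 0%N.
Proof.
move=> r_gt0; have n_gt0 : 0 < #|T|%:R :> R by rewrite ltr0n; apply/card_gt0P; exists v.
rewrite /pr => /eqP; rewrite mulf_eq0 invr_eq0 gt_eqF //= powR_eq0 => /andP [+ _].
rewrite mulf_eq0 invr_eq0 gt_eqF //= psumr_eq0 => [/allP/(_ v)|u _]; last exact: exprn_ge0.
by rewrite mem_index_enum expf_eq0 r_gt0 pnatr_eq0 => /(_ isT)/eqP.
Qed.

Lemma card_NS_pr_eq0 {R : realType} {T : finType} {e : rel T} {r : nat} (S : seq T) :
  (0 < r)%N -> pr R e r = 0 -> S != [::] -> #|NS e S| = 0%N.
Proof.
case: S => [//|u S] r_gt0 p0 _; apply/eqP; rewrite -leqn0 -(deg_pr_eq0 u r_gt0 p0).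
by apply/subset_leq_card/subsetP => v; rewrite !inE => /andP [].
Qed.

Section AlphaChoice.
Context {R : realFieldType}.
Variables (beta : R) (h : nat).
Hypotheses (beta_gt0 : 0 < beta) (beta_le1 : beta <= 1).

(* To reach tolerance [t] at level i+1, threshold at [shrink_rate t] and ask
   for tolerance [shrink t] at level i. *)
Definition shrink_rate (t : R) : R := t / (3 * h.+1%:R).

Definition shrink (t : R) : R := beta * shrink_rate t ^+ h * shrink_rate t.

Definition alpha_seq (m : nat) : R := iter m shrink beta.

Lemma shrink_rate_mulS (t : R) : shrink_rate t * h.+1%:R = t / 3.
Proof. by rewrite /shrink_rate; field; rewrite [1 + _]addrC natr1 pnatr_eq0. Qed.

Lemma shrink_rate_gt0 {t : R} : 0 < t -> 0 < shrink_rate t.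
Proof. by move=> t_gt0; rewrite divr_gt0 ?mulr_gt0. Qed.

Lemma shrink_rate_le {t : R} : 0 <= t -> shrink_rate t <= t / 3.
Proof.
move=> t_ge0; rewrite /shrink_rate ler_wpM2l // lef_pV2 ?posrE ?mulr_gt0 //.
by rewrite ler_peMr // ler1n.
Qed.

Lemma shrink_gt0 {t : R} : 0 < t -> 0 < shrink t.
Proof.
move=> t_gt0; have c_gt0 := shrink_rate_gt0 t_gt0.
by rewrite /shrink mulr_gt0 ?exprn_gt0 // mulr_gt0 ?exprn_gt0.
Qed.

Lemma shrink_le {t : R} : 0 < t -> t <= 1 -> shrink t <= t / 3.
Proof.
move=> t_gt0 t_le1; have c_gt0 := shrink_rate_gt0 t_gt0.
have c_le : shrink_rate t <= t / 3 := shrink_rate_le (ltW t_gt0).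
have c_le1 : shrink_rate t <= 1 by apply: le_trans c_le _; lra.
apply: le_trans c_le; rewrite ger_pMl // mulr_ile1 ?exprn_ge0 ?exprn_ile1 //; exact: ltW.
Qed.

Lemma shrink_div {t : R} : 0 < t -> shrink t / (beta * shrink_rate t ^+ h) = shrink_rate t.
Proof.
move=> t_gt0; have c_gt0 := shrink_rate_gt0 t_gt0.
by rewrite /shrink [_ * shrink_rate t]mulrC mulfK // mulf_neq0 ?expf_neq0 ?gt_eqF.
Qed.

Lemma alpha_seq_in (m : nat) : 0 < alpha_seq m <= beta.
Proof.
elim: m => [|m /andP [a_gt0 a_le]]; first by rewrite beta_gt0 lexx.
rewrite /alpha_seq iterS -/(alpha_seq m) shrink_gt0 //=.
apply: le_trans (shrink_le a_gt0 (le_trans a_le beta_le1)) _; lra.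
Qed.

Lemma alpha_seqS_le (m : nat) : alpha_seq m.+1 <= alpha_seq m / 3.
Proof.
have /andP [a_gt0 a_le] := alpha_seq_in m.
exact: shrink_le a_gt0 (le_trans a_le beta_le1).
Qed.

Lemma alpha_seq_nonincr : {homo alpha_seq : m n / (m <= n)%N >-> n <= m}.
Proof.
apply: homo_leq => [x|y x z xy yz|m]; [exact: lexx | exact: le_trans yz xy |].
have /andP [a_gt0 _] := alpha_seq_in m.
apply: le_trans (alpha_seqS_le m) _; lra.
Qed.

End AlphaChoice.

Section BadSums.
Variables (R : realType) (T : finType) (e : rel T) (alpha beta : R) (h r : nat).
Hypotheses (e_sym : symmetric e) (beta_gt0 : 0 < beta) (beta_le1 : beta <= 1).
Hypotheses (alpha_ge0 : 0 <= alpha) (alpha_le1 : alpha <= 1).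

Local Notation n := (#|T|%:R : R).
Local Notation p := (pr R e r).
Local Notation N S := ((#|NS e S|)%:R : R).
Local Notation good_at i := (good e alpha beta h r i).

Definition bad_sum_le (i : nat) (eps : R) : Prop :=
  forall j l : nat, (1 <= j <= h)%N -> (1 <= l <= j)%N ->
    \sum_(S : j.-tuple T | ~~ good_at i S) N S ^+ l <= eps * n ^+ (j + l) * p ^+ (j * l).

Lemma sum_not_good0_le (j l : nat) : (0 < l)%N ->
  \sum_(S : j.-tuple T | ~~ good0 e alpha r S) N S ^+ l
    <= alpha * n ^+ (j + l) * p ^+ (j * l).
Proof.
move=> l_gt0; have P_ge0 : 0 <= p ^+ j * n by rewrite mulr_ge0 ?exprn_ge0 ?pr_ge0.
apply: le_trans (@ler_sum_card _ _ _ _ (alpha * (p ^+ j * n) ^+ l) _ _) _.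
- by rewrite mulr_ge0 ?exprn_ge0.
- move=> S; rewrite /good0 size_tuple -ltNge -mulrA => /ltW small.
  apply: le_trans (_ : (alpha * (p ^+ j * n)) ^+ l <= _).
    by apply: lerXn2r; rewrite // nnegrE ?ler0n // mulr_ge0.
  by rewrite exprMn ler_wpM2r ?exprn_ge0 // -[leRHS]expr1 ler_wiXn2l.
- by rewrite card_tuple natrX exprMn -exprM exprD mulrCA [p ^+ _ * _]mulrC !mulrA.
Qed.

Definition fails_at (i k : nat) (S : seq T) : bool :=
  (size S <= k)%N &&
  ((#|[set t : k.-tuple T | all (fun x => x \in NS e S) t && good_at i t]|)%:R
     < (1 - beta) * N S ^+ k).

Lemma not_goodS (i : nat) (S : seq T) : (size S <= h)%N ->
  ~~ good_at i.+1 S -> ~~ good0 e alpha r S \/ exists k : 'I_h.+1, fails_at i k S.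
Proof.
rewrite /= => -> /=; case: good0 => /=; last by left.
by rewrite negb_forall => /existsP [k]; rewrite negb_imply -ltNge; right; exists k.
Qed.

Lemma card_not_good_ge (i k : nat) (S : seq T) : fails_at i k S ->
  beta * N S ^+ k
    <= (#|[set t : k.-tuple T | all (fun x => x \in NS e S) t && ~~ good_at i t]|)%:R.
Proof.
case/andP => _; set G := (X in X < _) => fewG.
pose A (t : k.-tuple T) := all (fun x => x \in NS e S) t.
have : (#|[set t | A t && good_at i t]| + #|[set t | A t && ~~ good_at i t]|
        = #|NS e S| ^ k)%N.
  rewrite -card_tuples_in -!sum1dep_card.
  by rewrite [RHS](bigID (fun t : k.-tuple T => good_at i t)).
by move/(congr1 (fun m : nat => m%:R : R)); rewrite natrD natrX -/G; nra.
Qed.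

Lemma sum_fails_at_pow_le {i : nat} {eps : R} {k j : nat} :
  bad_sum_le i eps -> (k <= h)%N -> (1 <= j <= k)%N ->
  beta * \sum_(S : j.-tuple T | fails_at i k S) N S ^+ k
    <= eps * n ^+ (k + j) * p ^+ (k * j).
Proof.
move=> bound kh /andP [j_gt0 jk].
pose bad (S : seq T) : R :=
  (#|[set t : k.-tuple T | all (fun x => x \in NS e S) t && ~~ good_at i t]|)%:R.
rewrite mulr_sumr; apply: (@le_trans _ _ (\sum_(S : j.-tuple T) bad S)).
  apply: le_trans (_ : _ <= \sum_(S : j.-tuple T | fails_at i k S) bad S) _.
    by apply: ler_sum => S; apply: card_not_good_ge.
  by rewrite [leRHS](bigID (fun S : j.-tuple T => fails_at i k S)) lerDl sumr_ge0.
rewrite /bad -natr_sum sum_card_tuples_in_NS // natr_sum.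
under eq_bigr do rewrite natrX.
by apply: bound; rewrite ?(leq_trans j_gt0 jk) ?j_gt0.
Qed.

Hypothesis p_gt0 : 0 < p.

Lemma sum_fails_at_scaled_le {i : nat} {eps c : R} {k j l : nat} :
  bad_sum_le i eps -> 0 <= eps -> 0 < c -> c <= 1 ->
  (k <= h)%N -> (1 <= j)%N -> (l <= j <= k)%N ->
  (\sum_(S : j.-tuple T | fails_at i k S) N S ^+ k) / (c * (p ^+ j * n)) ^+ (k - l)
    <= eps / (beta * c ^+ h) * (n ^+ (j + l) * p ^+ (j * l)).
Proof.
move=> bound eps_ge0 c_gt0 c_le1 kh j_gt0 ljk; have /andP [_ jk] := ljk.
have n_gt0 : 0 < n by rewrite ltr0n (card_gt0_pr_gt0 p_gt0).
set P := p ^+ j * n; have P_gt0 : 0 < P by rewrite mulr_gt0 ?exprn_gt0.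
set X := n ^+ (j + l) * p ^+ (j * l); have X_gt0 : 0 < X by rewrite mulr_gt0 ?exprn_gt0.
have cP_gt0 : 0 < c * P by rewrite mulr_gt0.
have jk1 : (1 <= j <= k)%N by rewrite j_gt0.
have := sum_fails_at_pow_le bound kh jk1.
rewrite -mulrA (expr_split n p ljk) -/P -/X => key.
rewrite ler_pdivrMr ?exprn_gt0 // -(ler_pM2l beta_gt0); apply: le_trans key _.
rewrite [leRHS](_ : _ = eps * (P ^+ (k - l) * X) * (c ^+ (k - l) / c ^+ h)); last first.
  by rewrite [(c * P) ^+ _]exprMn; field; rewrite !gt_eqF ?exprn_gt0.
apply: ler_peMr; first by rewrite mulr_ge0 // mulr_ge0 ?exprn_ge0 // ltW.
rewrite ler_pdivlMr ?exprn_gt0 // mul1r.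
by apply: ler_wiXn2l => //; [exact: ltW | exact: leq_trans (leq_subr _ _) kh].
Qed.

Lemma sum_fails_at_le {i : nat} {eps c : R} {k j l : nat} :
  bad_sum_le i eps -> 0 <= eps -> 0 < c -> c <= 1 ->
  (k <= h)%N -> (1 <= j <= h)%N -> (1 <= l <= j)%N ->
  \sum_(S : j.-tuple T | fails_at i k S) N S ^+ l
    <= (c + eps / (beta * c ^+ h)) * (n ^+ (j + l) * p ^+ (j * l)).
Proof.
move=> bound eps_ge0 c_gt0 c_le1 kh /andP [j_gt0 jh] /andP [l_gt0 lj].
have n_gt0 : 0 < n by rewrite ltr0n (card_gt0_pr_gt0 p_gt0).
have [kj | jk] := ltnP k j.
  rewrite big_pred0 => [|S]; last by rewrite /fails_at size_tuple leqNgt kj.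
  rewrite mulr_ge0 ?mulr_ge0 ?exprn_ge0 ?ler0n ?pr_ge0 //.
  by rewrite addr_ge0 ?divr_ge0 ?mulr_ge0 ?exprn_ge0 // ltW.
have cP_gt0 : 0 < c * (p ^+ j * n) by rewrite !mulr_gt0 ?exprn_gt0.
apply: le_trans (sum_pow_threshold _ (fun S => ler0n _ _) cP_gt0 (leq_trans lj jk)) _.
rewrite mulrDl card_tuple natrX; apply: lerD; last first.
  by apply: sum_fails_at_scaled_le; rewrite ?lj.
rewrite exprMn mulrCA [_ * (_ * n) ^+ l](_ : _ = n ^+ (j + l) * p ^+ (j * l)); last first.
  by rewrite exprMn -exprM exprD; ring.
apply: ler_wpM2r; first by rewrite mulr_ge0 ?exprn_ge0 ?ltW.
by rewrite -[leRHS]expr1; apply: ler_wiXn2l => //; exact: ltW.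
Qed.

Lemma bad_sum_leS (i : nat) (t : R) : 0 < t -> t <= 1 -> alpha <= t / 3 ->
  bad_sum_le i (shrink beta h t) -> bad_sum_le i.+1 t.
Proof.
move=> t_gt0 t_le1 alpha_le bound j l hj hl.
have /andP [_ jh] := hj; have /andP [l_gt0 _] := hl.
set c := shrink_rate h t.
have c_gt0 : 0 < c := shrink_rate_gt0 h t_gt0.
have c_le1 : c <= 1 by apply: le_trans (shrink_rate_le h (ltW t_gt0)) _; lra.
have eps_ge0 : 0 <= shrink beta h t := ltW (shrink_gt0 beta h beta_gt0 t_gt0).
have per_k (k : 'I_h.+1) : \sum_(S : j.-tuple T | fails_at i k S) N S ^+ l
    <= (c + shrink beta h t / (beta * c ^+ h)) * (n ^+ (j + l) * p ^+ (j * l)).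
  by apply: sum_fails_at_le; rewrite // -ltnS.
rewrite /c shrink_div // in per_k.
have cover (S : j.-tuple T) : ~~ good_at i.+1 S ->
    ~~ good0 e alpha r S \/ exists k : 'I_h.+1, fails_at i k S.
  by apply: not_goodS; rewrite size_tuple.
have := ler_sum_cover _ (fun S : j.-tuple T => ~~ good0 e alpha r S)
  (fun (k : 'I_h.+1) (S : j.-tuple T) => fails_at i k S) (fun S => N S ^+ l)
  (fun S => exprn_ge0 l (ler0n R _)) cover.
move/le_trans; apply.
have sum_k := ler_sum (index_enum 'I_h.+1) (fun k (_ : true) => per_k k).
apply: le_trans (lerD (sum_not_good0_le j l l_gt0) sum_k) _.
rewrite sumr_const card_ord -[_ *+ h.+1]mulr_natr [(_ + _) * _ * _]mulrAC mulrDl.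
rewrite !shrink_rate_mulS -!mulrA -mulrDl.
by apply: ler_wpM2r; [rewrite mulr_ge0 ?exprn_ge0 ?ler0n ?pr_ge0 | lra].
Qed.

Lemma bad_sum_le_alpha_seq (i : nat) : alpha = alpha_seq beta h h -> (i <= h)%N ->
  bad_sum_le i (alpha_seq beta h (h - i)).
Proof.
move=> alpha_eq; elim: i => [_ | i IH ih].
  by rewrite subn0 -alpha_eq => j l _ /andP [l_gt0 _]; apply: sum_not_good0_le.
have hi : (h - i = (h - i.+1).+1)%N by rewrite subnSK.
have := IH (ltnW ih); rewrite hi => bound.
have /andP [a_gt0 a_le] := alpha_seq_in beta h beta_gt0 beta_le1 (h - i.+1).
apply: bad_sum_leS bound => //; first exact: le_trans a_le beta_le1.
rewrite alpha_eq; apply: le_trans (alpha_seqS_le beta h beta_gt0 beta_le1 _).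
by apply: (alpha_seq_nonincr beta h beta_gt0 beta_le1); rewrite -hi leq_subr.
Qed.

End BadSums.

Theorem lemma3p4 (R : realType) (h r : nat) (beta : R) :
  (0 < r)%N -> (r <= h)%N -> 0 < beta -> beta < 1 ->
  exists alpha : R, 0 < alpha /\ alpha < 1 /\
    forall (T : finType) (e : rel T), simple_graph e ->
    forall i j l : nat, (i <= h)%N -> (1 <= j <= h)%N -> (1 <= l <= j)%N ->
      \sum_(S : j.-tuple T | ~~ good e alpha beta h r i S) ((#|NS e S|)%:R : R) ^+ l
        <= beta * (#|T|)%:R ^+ (j + l) * (pr R e r) ^+ (j * l).
Proof.
move=> r_gt0 _ beta_gt0 beta_lt1; have beta_le1 := ltW beta_lt1.
have /andP [alpha_gt0 alpha_le_beta] := alpha_seq_in beta h beta_gt0 beta_le1 h.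
exists (alpha_seq beta h h); split => //; split; first exact: le_lt_trans alpha_le_beta beta_lt1.
move=> T e [e_sym _] i j l ih hj hl.
have [p_eq0 | p_neq0] := eqVneq (pr R e r) 0.
  rewrite big1 => [|S _]; first by rewrite !mulr_ge0 ?exprn_ge0 ?ler0n ?pr_ge0 // ltW.
  have [/andP [j_gt0 _] /andP [l_gt0 _]] := (hj, hl).
  rewrite (card_NS_pr_eq0 _ r_gt0 p_eq0) ?expr0n ?gtn_eqF //.
  by rewrite -size_eq0 size_tuple -lt0n.
have p_gt0 : 0 < pr R e r by rewrite lt_def p_neq0 pr_ge0.
have bound : bad_sum_le R T e (alpha_seq beta h h) beta h r i (alpha_seq beta h (h - i)).
  apply: bad_sum_le_alpha_seq => //; first exact: ltW.
  exact: le_trans alpha_le_beta beta_le1.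
apply: le_trans (bound j l hj hl) _.
rewrite -!mulrA ler_wpM2r ?mulr_ge0 ?exprn_ge0 ?ler0n ?pr_ge0 //.
by case/andP: (alpha_seq_in beta h beta_gt0 beta_le1 (h - i)).
Qed.
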